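(* Let $s>0$, $0\le r\le 1/4$, and $d:=s(2+s)$. Let $Z$ be a nonnegative random variable satisfying $Z\ge 2rs$ and $\mathbb{E}[Z]\le 2rs+r^2s^2$. Define $F(u):=\min\{1,48u^2\}$ for $u\ge0$. Then \[ \mathbb{E}\left[F\left(\frac{Z}{d}\right)\right]\le 48r^2. \] *)

From HB Require Import structures.
From mathcomp Require Import all_boot all_order all_algebra.
From mathcomp Require Import all_classical all_reals all_analysis.
Set Implicit Arguments. Unset Strict Implicit. Unset Printing Implicit Defensive.
Import Order.TTheory GRing.Theory Num.Theory.
Local Open Scope ring_scope.

Definition Fcap {R : realType} (u : R) : R := Order.min 1 (48 * u ^+ 2).

From HB Require Import structures.
From mathcomp Require Import all_boot all_order all_algebra.
From mathcomp Require Import all_classical all_reals all_analysis.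
From mathcomp Require Import ring lra.
From mathcomp Require Import measurable_realfun.
Import Order.TTheory GRing.Theory Num.Theory.
Local Open Scope ring_scope.

(* On [u >= a] with a := 2rs/d, F is dominated by the affine function through
   (a, 48 a^2) with slope 48 (1/6 + a), the chord of 48 u^2 between a and 1/6.
   Taking expectations, E[F (Z/d)] is at most this affine function evaluated at
   E[Z]/d <= a + r^2 s^2 / d, and that value falls short of 48 r^2 by
   48 r^2 s (11/3 + 5s/6 - 2r) / (2 + s)^2 >= 0. *)

Lemma Fcap_ge0 {R : realType} (u : R) : 0 <= Fcap u.
Proof. by rewrite /Fcap le_min ler01 mulr_ge0 // sqr_ge0. Qed.

Lemma measurable_Fcap (R : realType) : measurable_fun setT (@Fcap R).
Proof.
apply: measurable_minr; first exact: measurable_cst.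
apply: measurable_funM; first exact: measurable_cst.
exact/measurable_funX/measurable_id.
Qed.

Lemma Fcap_le_chord {R : realType} (a u : R) : 0 <= a -> a <= u ->
  Fcap u <= 48 * a ^+ 2 + 48 * (6^-1 + a) * (u - a).
Proof.
move=> a0 au; rewrite /Fcap ge_min.
(* Left of 1/6 the chord lies above the convex parabola; right of it,
   above 48/36 > 1. *)
by have [u6|u6] := leP u 6^-1; apply/orP; [right | left]; nra.
Qed.

Lemma Fcap_scaled_le_chord {R : realType} {c d : R} (x : R) :
  0 < d -> 0 <= c -> c <= x ->
  Fcap (x / d) <= 48 * (c / d) ^+ 2 + 48 * (6^-1 + c / d) / d * (x - c).
Proof.
move=> d0 c0 cx.
have -> : 48 * (6^-1 + c / d) / d * (x - c) = 48 * (6^-1 + c / d) * (x / d - c / d).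
  by field; rewrite lt0r_neq0.
apply: Fcap_le_chord; first by rewrite divr_ge0 // ltW.
by rewrite ler_pM2r // invr_gt0.
Qed.

Lemma chord_value_le (R : realFieldType) (r s : R) :
  0 < s -> 0 <= r -> r <= 4^-1 ->
  48 * (2 * r * s / (s * (2 + s))) ^+ 2
    + 48 * (6^-1 + 2 * r * s / (s * (2 + s))) / (s * (2 + s)) * (r ^+ 2 * s ^+ 2)
  <= 48 * r ^+ 2.
Proof.
move=> s0 r0 r4; set d := s * (2 + s); set a := 2 * r * s / d; rewrite -subr_ge0.
have t0 : 0 < 2 + s by rewrite ltr_wpDr // ltW.
have -> : 48 * r ^+ 2 - (48 * a ^+ 2 + 48 * (6^-1 + a) / d * (r ^+ 2 * s ^+ 2))
          = 48 * r ^+ 2 * s * (11 / 3 + 5 / 6 * s - 2 * r) / (2 + s) ^+ 2.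
  by rewrite /a /d; field; rewrite !lt0r_neq0.
have q0 : 0 <= 11 / 3 + 5 / 6 * s - 2 * r by lra.
by rewrite divr_ge0 ?sqr_ge0 // !mulr_ge0 ?sqr_ge0 // ltW.
Qed.

Section affine_majorant.
Local Open Scope ereal_scope.
Context {d} {T : measurableType d} {R : realType} (P : probability T R).

Lemma expectation_affine_ge0 (Y : T -> R) (a b : R) :
  measurable_fun setT Y -> (forall w, 0 <= Y w)%R -> (0 <= a)%R -> (0 <= b)%R ->
  'E_P[fun w => a + b * Y w]%R = a%:E + b%:E * 'E_P[Y].
Proof.
move=> mY Y0 a0 b0; rewrite !unlock.
under eq_integral do rewrite EFinD EFinM.
rewrite ge0_integralD //; last 2 first.
- by move=> w _; rewrite lee_fin mulr_ge0.
- by apply: measurable_funeM; apply/measurable_EFinP.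
rewrite (@ge0_integralZl_EFin _ _ _ P setT measurableT (EFin \o Y)) //; last 2 first.
- by move=> w _; rewrite lee_fin.
- by apply/measurable_EFinP.
by congr (_ + _); have := expectation_cst P a; rewrite unlock.
Qed.

Lemma expectation_sub_cst (Y : T -> R) (c : R) :
  measurable_fun setT Y -> (0 <= c)%R -> (forall w, c <= Y w)%R ->
  'E_P[fun w => Y w - c]%R = 'E_P[Y] - c%:E.
Proof.
move=> mY c0 cY.
have -> : 'E_P[Y] = 'E_P[fun w => c + 1 * (Y w - c)]%R.
  by congr expectation; apply/funext => w; rewrite mul1r addrC subrK.
rewrite expectation_affine_ge0 //; last 2 first.
- exact: measurable_funB.
- by move=> w; rewrite subr_ge0.
by rewrite mul1e addeAC subee // add0e.
Qed.

Lemma expectation_le_affine_majorant {X : {RV P >-> R}} {f : R -> R} {c a b : R} :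
  measurable_fun setT f -> (forall x, 0 <= f x)%R -> (0 <= c)%R -> (0 <= b)%R ->
  (forall x, c <= x -> f x <= a + b * (x - c))%R ->
  {ae P, forall w, c <= X w}%R ->
  'E_P[f \o X] <= a%:E + b%:E * ('E_P[X] - c%:E).
Proof.
move=> mf f0 c0 b0 fab cX.
have a0 : (0 <= a)%R.
  by have := fab c (lexx c); rewrite subrr mulr0 addr0; exact: le_trans.
(* Y equals X almost surely, and Y - c is nonnegative everywhere. *)
pose Y w := Num.max (X w) c.
have mX : measurable_fun setT X by exact: measurable_funP.
have mY : measurable_fun setT Y by exact: measurable_maxr.
have cY w : (c <= Y w)%R by rewrite le_max lexx orbT.
have EXY : 'E_P[X] = 'E_P[Y].
  rewrite !unlock; apply: ae_eq_integral => //; try exact/measurable_EFinP.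
  by apply: filterS cX => w cXw _; rewrite /Y max_l.
rewrite EXY -expectation_sub_cst // -expectation_affine_ge0 //; last 2 first.
- exact: measurable_funB.
- by move=> w; rewrite subr_ge0.
apply: expectation_le => //.
- exact: measurableT_comp.
- apply: measurable_funD; first exact: measurable_cst.
  by apply: measurable_funM; [exact: measurable_cst | exact: measurable_funB].
- by move=> w; exact: f0.
- by move=> w; rewrite addr_ge0 // mulr_ge0 // subr_ge0.
- by apply: filterS cX => w cXw; rewrite /Y max_l //; exact: fab.
Qed.

End affine_majorant.

Theorem lemmaA1 (R : realType) (dT : measure_display) (T : measurableType dT)
  (P : probability T R) (Z : {RV P >-> R}) (s r : R) :
  0 < s -> 0 <= r -> r <= 4^-1 ->
  {ae P, forall w, 0 <= Z w} ->
  {ae P, forall w, 2 * r * s <= Z w} ->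
  ('E_P[Z] <= (2 * r * s + r ^+ 2 * s ^+ 2)%:E)%E ->
  ('E_P[fun w => Fcap (Z w / (s * (2 + s)))] <= (48 * r ^+ 2)%:E)%E.
Proof.
(* Nonnegativity of Z already follows from Z >= 2rs >= 0. *)
move=> s0 r0 r4 _ cZ EZ.
set d := s * (2 + s); set c := 2 * r * s; set b := 48 * (6^-1 + c / d) / d.
have d0 : 0 < d by rewrite mulr_gt0 // ltr_wpDr // ltW.
have c0 : 0 <= c by rewrite !mulr_ge0 // ltW.
have b0 : 0 <= b by rewrite divr_ge0 ?mulr_ge0 ?addr_ge0 ?divr_ge0 // ltW.
have mf : measurable_fun setT (fun x : R => Fcap (x / d)).
  by apply: measurableT_comp (measurable_Fcap R) _; exact: measurable_funM.
apply: le_trans (expectation_le_affine_majorant P mf (fun x => Fcap_ge0 (x / d))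
  c0 b0 (fun x => Fcap_scaled_le_chord x d0 c0) cZ) _.
have EZc : ('E_P[Z] - c%:E <= (r ^+ 2 * s ^+ 2)%:E)%E by rewrite leeBlDl // -EFinD.
apply: le_trans (_ : (48 * (c / d) ^+ 2)%:E + b%:E * (r ^+ 2 * s ^+ 2)%:E <= _)%E.
  by rewrite leeD2lE // lee_wpmul2l // lee_fin.
by rewrite -EFinM -EFinD lee_fin; exact: chord_value_le.
Qed.
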